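(* Let $X$ be a real Hilbert space, $A,B\colon X\rightrightarrows X$ maximally monotone, $T:=\operatorname{Id}-J_A+J_BR_A$, $v:=P_{\overline{\operatorname{ran}}(\operatorname{Id}-T)}(0)$, $D:=\operatorname{dom}A-\operatorname{dom}B$, $R:=\operatorname{ran}A+\operatorname{ran}B$, $v_D:=P_{\overline D}(0)$, $v_R:=P_{\overline R}(0)$, and assume $\overline{\operatorname{ran}}(\operatorname{Id}-T)=\overline{D\cap R}=\overline D\cap\overline R$. Set $Z:=\{x\in X: 0\in -v+Ax+B(x-v)\}$ and $\widetilde Z:=\{x\in X: 0\in -v_R+Ax+B(x-v_D)\}$. Then (i) $\widetilde Z\subseteq Z$; (ii) if $v_R=0$, then $\widetilde Z=Z$.
   Context: $J_C:=(\operatorname{Id}+C)^{-1}$ is the resolvent and $R_C:=2J_C-\operatorname{Id}$ the reflected resolvent of a maximally monotone operator $C$. $P_S$ denotes the projection onto a nonempty closed convex set $S$; the closures $\overline D,\overline R$ are convex. $\overline{\operatorname{ran}}$ denotes closure of the range. *)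

From HB Require Import structures.
From mathcomp Require Import all_boot all_order all_algebra.
From mathcomp Require Import all_classical all_reals all_analysis.
Set Implicit Arguments. Unset Strict Implicit. Unset Printing Implicit Defensive.
Import Order.TTheory GRing.Theory Num.Theory.
Import numFieldNormedType.Exports.
Local Open Scope classical_set_scope.
Local Open Scope ring_scope.

Section Defs.
Variables (R : realType) (X : normedModType R).

(* ip is an inner product on X inducing the norm of X
   (so a complete X with such an ip is a real Hilbert space). *)
Definition is_inner_product (ip : X -> X -> R) : Prop :=
  [/\ (forall x y, ip x y = ip y x),
      (forall (a : R) (x y z : X), ip (a *: x + y) z = a * ip x z + ip y z) &
      (forall x, ip x x = `|x| ^+ 2)].

Definition monotone_op (ip : X -> X -> R) (A : X -> set X) : Prop :=
  forall x y u w, A x u -> A y w -> 0 <= ip (x - y) (u - w).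

Definition maximally_monotone (ip : X -> X -> R) (A : X -> set X) : Prop :=
  monotone_op ip A /\
  forall B : X -> set X, monotone_op ip B ->
    (forall x u, A x u -> B x u) -> forall x u, B x u -> A x u.

Definition dom_op (A : X -> set X) : set X := [set x | exists u, A x u].
Definition ran_op (A : X -> set X) : set X := [set u | exists x, A x u].

(* resolvent J_C = (Id + C)^{-1}, as a set-valued operator *)
Definition resolvent (C : X -> set X) : X -> set X :=
  fun x => [set y | C y (x - y)].

Definition refl_resolvent (C : X -> set X) : X -> set X :=
  fun x => [set 2%:R *: y - x | y in resolvent C x].

Definition DR_op (A B : X -> set X) : X -> set X :=
  fun x => [set t | exists a r b, [/\ resolvent A x a, refl_resolvent A x r,
                     resolvent B r b & t = x - a + b]].

Definition id_minus (T : X -> set X) : X -> set X :=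
  fun x => [set x - t | t in T x].

Definition dom_diff (A B : X -> set X) : set X :=
  [set d | exists a b, [/\ dom_op A a, dom_op B b & d = a - b]].
Definition ran_sum (A B : X -> set X) : set X :=
  [set r | exists a b, [/\ ran_op A a, ran_op B b & r = a + b]].

Definition is_proj (S : set X) (z p : X) : Prop :=
  S p /\ forall s, S s -> `|z - p| <= `|z - s|.

End Defs.

From HB Require Import structures.
From mathcomp Require Import all_boot all_order all_algebra.
From mathcomp Require Import all_classical all_reals all_analysis.
From mathcomp Require Import ring lra.
Set Implicit Arguments. Unset Strict Implicit. Unset Printing Implicit Defensive.
Import Order.TTheory GRing.Theory Num.Theory.
Import numFieldNormedType.Exports.
Local Open Scope classical_set_scope.
Local Open Scope ring_scope.

(* For (i), let a ∈ Ax and b ∈ B(x - vD) with a + b = vR.  The projection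
   inequalities for vD onto cl D and for vR onto cl R (both convex by Minty's
   theorem) show, by maximality, that (x - vR, a - vD) ∈ gra A if
   <vR, vD> >= 0 and that (x - vD - vR, b + vD) ∈ gra B if <vR, vD> <= 0.
   Feeding these pairs back into the inequality for vD forces <vR, vD> = 0;
   then vD + vR ∈ D ∩ R, the minimal-norm property of v gives v = vD + vR,
   and x ∈ Z.  For (ii), dom B lies in a half-space {q | <q, vD> <= β}, which
   makes vD a recession direction of cl ran B; if vR = 0 this puts vD in
   cl R ∩ cl D = cl (D ∩ R), hence v = vD and (x, a - vD) ∈ gra A.
   Minty's theorem is proved by minimizing c + (|x|² + |u|²)/2 over the
   epigraph of the Fitzpatrick function. *)

Lemma ge0_affine_near0 (R : realFieldType) (a b : R) :
  (forall t, 0 < t -> t <= 1 -> 0 <= a + t * b) -> 0 <= a.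
Proof.
move=> hab; rewrite leNgt; apply/negP => a_lt0.
have nb_a_gt0 : 0 < `|b| - a by rewrite subr_gt0 (lt_le_trans a_lt0).
pose t := - a / (`|b| - a).
have t_gt0 : 0 < t by rewrite divr_gt0 // oppr_gt0.
have t_le1 : t <= 1 by rewrite ler_pdivrMr // mul1r; have := normr_ge0 b; lra.
have := hab t t_gt0 t_le1; apply/negP; rewrite -ltNge.
have tb_le : t * b <= t * `|b| by rewrite ler_pM2l // ler_norm.
suff : a + t * `|b| < 0 by lra.
have -> : a + t * `|b| = - a ^+ 2 / (`|b| - a).
  by rewrite /t; field; rewrite gt_eqF.
by rewrite mulNr oppr_lt0 divr_gt0 // expr2 nmulr_rgt0.
Qed.

Section InnerProduct.
Variables (R : realType) (X : normedModType R) (ip : X -> X -> R).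
Hypothesis hip : is_inner_product ip.

Lemma ipC x y : ip x y = ip y x. Proof. by case: hip. Qed.

Lemma ipxx x : ip x x = `|x| ^+ 2. Proof. by case: hip. Qed.

Lemma ipDl x y z : ip (x + y) z = ip x z + ip y z.
Proof. by case: hip => _ lin _; rewrite -[x]scale1r lin mul1r scale1r. Qed.

Lemma ip0l z : ip 0 z = 0.
Proof.
by case: hip => _ lin _; have := lin 1 0 0 z; rewrite scaler0 addr0 mul1r; lra.
Qed.

Lemma ipZl a x z : ip (a *: x) z = a * ip x z.
Proof.
by case: hip => _ lin _; have := lin a x 0 z; rewrite !addr0 ip0l addr0.
Qed.

Lemma ipNl x z : ip (- x) z = - ip x z.
Proof. by rewrite -scaleN1r ipZl mulN1r. Qed.
Lemma ipBl x y z : ip (x - y) z = ip x z - ip y z.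
Proof. by rewrite ipDl ipNl. Qed.
Lemma ip0r z : ip z 0 = 0. Proof. by rewrite ipC ip0l. Qed.
Lemma ipDr x y z : ip z (x + y) = ip z x + ip z y.
Proof. by rewrite ipC ipDl !(ipC z). Qed.
Lemma ipZr a x z : ip z (a *: x) = a * ip z x.
Proof. by rewrite ipC ipZl ipC. Qed.
Lemma ipNr x z : ip z (- x) = - ip z x. Proof. by rewrite ipC ipNl ipC. Qed.
Lemma ipBr x y z : ip z (x - y) = ip z x - ip z y.
Proof. by rewrite ipDr ipNr. Qed.

Definition ipE := (ipDl, ipDr, ipBl, ipBr, ipZl, ipZr, ipNl, ipNr).

Lemma ipxx_ge0 x : 0 <= ip x x. Proof. by rewrite ipxx sqr_ge0. Qed.

Lemma ipxx_le0 x : ip x x <= 0 -> x = 0.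
Proof.
move=> le0; apply/normr0_eq0/eqP.
by rewrite -sqrf_eq0 -ipxx eq_le le0 ipxx_ge0.
Qed.

Lemma cauchy_schwarz x y : `|ip x y| <= `|x| * `|y|.
Proof.
have [->|y_neq0] := eqVneq y 0; first by rewrite ip0r !normr0 mulr0.
have ny_gt0 : 0 < `|y| by rewrite normr_gt0.
have := ipxx_ge0 (`|y| ^+ 2 *: x - ip x y *: y).
rewrite !ipE !ipxx (ipC y x) => h.
have : (ip x y) ^+ 2 <= (`|x| * `|y|) ^+ 2.
  by rewrite -subr_ge0 -(pmulr_rge0 _ (exprn_gt0 2 ny_gt0)); lra.
by rewrite -real_normK ?num_real // ler_pXn2r // nnegrE mulr_ge0.
Qed.

Lemma ip_polar x y : ip x y = (`|x + y| ^+ 2 - `|x| ^+ 2 - `|y| ^+ 2) / 2.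
Proof. by rewrite -!ipxx !ipE (ipC y x); field. Qed.

Lemma ip_cvg {T} {F : set_system T} {FF : Filter F} (f g : T -> X) x y :
  f @ F --> x -> g @ F --> y -> (fun t => ip (f t) (g t)) @ F --> ip x y.
Proof.
move=> fx gy; rewrite ip_polar; under eq_fun do rewrite ip_polar.
have sqr_cvg (h : T -> X) z :
    h @ F --> z -> (fun t => `|h t| ^+ 2) @ F --> `|z| ^+ 2.
  move=> /cvg_norm hz; rewrite expr2.
  by under eq_fun do rewrite expr2; apply: cvgM.
apply: cvgMr_tmp; apply: cvgB; [apply: cvgB|]; apply: sqr_cvg => //.
exact: cvgD.
Qed.

End InnerProduct.

Section MonotoneOperators.
Variables (R : realType) (X : normedModType R) (ip : X -> X -> R).
Hypothesis hip : is_inner_product ip.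
Implicit Types (M : X -> set X) (x y u w : X).

Lemma maximally_monotoneP M y w : maximally_monotone ip M ->
  (forall p a, M p a -> 0 <= ip (y - p) (w - a)) -> M y w.
Proof.
move=> [monoM maxM] yw_mono.
pose M' z := [set u | M z u \/ z = y /\ u = w].
apply: (maxM M') => [x1 x2 u1 u2 [h1|[-> ->]] [h2|[-> ->]]|x u h|]; last by right.
- exact: monoM.
- by have := yw_mono _ _ h1; rewrite !(ipE hip); lra.
- exact: yw_mono.
- by rewrite !subrr ip0l.
- by left.
Qed.

Lemma maximally_monotone_shift M x a d e : maximally_monotone ip M -> M x a ->
  (forall p a', M p a' -> 0 <= ip (p - x) d) ->
  (forall p a', M p a' -> 0 <= ip (a' - a) e) ->
  0 <= ip e d -> M (x - e) (a - d).
Proof.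
move=> hM Mxa hd he hed; apply: maximally_monotoneP => // p a' Mpa'.
have := hM.1 _ _ _ _ Mxa Mpa'; have := hd _ _ Mpa'; have := he _ _ Mpa'.
rewrite !(ipE hip) (ipC hip a e) (ipC hip a' e); lra.
Qed.

Definition inv_op M : X -> set X := fun u => [set x | M x u].

Lemma maximally_monotone_inv M :
  maximally_monotone ip M -> maximally_monotone ip (inv_op M).
Proof.
move=> [monoM maxM]; split=> [x y u w h1 h2|M' monoM' subM' x u M'xu].
  by rewrite ipC //; apply: monoM.
apply: (maxM (inv_op M')) M'xu => [x1 x2 u1 u2 h1 h2|x' u' h].
  by rewrite ipC //; apply: monoM'.
exact: subM'.
Qed.

Lemma maximally_monotone_rescale M (lam : R) z : 0 < lam ->
  maximally_monotone ip M ->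
  maximally_monotone ip (fun y => [set lam *: w - z | w in M y]).
Proof.
move=> lam_gt0 hM; split.
  move=> x1 x2 _ _ [w1 h1 <-] [w2 h2 <-].
  rewrite opprB addrA subrK -scalerBr (ipZr hip).
  exact/mulr_ge0/(hM.1 _ _ _ _ h1 h2)/ltW.
move=> M' monoM' subM' x u M'xu; exists (lam^-1 *: (u + z)); last first.
  by rewrite scalerA mulfV ?gt_eqF // scale1r addrK.
apply: (maximally_monotoneP hM) => p a Mpa.
have := monoM' _ _ _ _ M'xu (subM' p _ (ex_intro2 _ _ a Mpa erefl)).
have -> : u - (lam *: a - z) = lam *: (lam^-1 *: (u + z) - a).
  by rewrite scalerBr scalerA mulfV ?gt_eqF // scale1r opprB addrA.
by rewrite (ipZr hip) pmulr_rge0.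
Qed.

(* The epigraph of the Fitzpatrick function
   F_M(x, u) = sup {<x, w> + <y, u> - <y, w> | (y, w) ∈ gra M}. *)
Definition fitzpatrick_le M x u (c : R) :=
  forall y w, M y w -> ip x w + ip y u - ip y w <= c.

Lemma fitzpatrick_le_graph M y w :
  monotone_op ip M -> M y w -> fitzpatrick_le M y w (ip y w).
Proof.
move=> monoM Myw y' w' My'w'; have := monoM _ _ _ _ Myw My'w'.
rewrite !(ipE hip) (ipC hip y' w); lra.
Qed.

Lemma fitzpatrick_le_conv M x1 u1 c1 x2 u2 c2 (t : R) : 0 <= t <= 1 ->
  fitzpatrick_le M x1 u1 c1 -> fitzpatrick_le M x2 u2 c2 ->
  fitzpatrick_le M ((1 - t) *: x1 + t *: x2) ((1 - t) *: u1 + t *: u2)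
    ((1 - t) * c1 + t * c2).
Proof.
move=> /andP[t_ge0 t_le1] F1 F2 y w Myw.
have h1 : 0 <= (1 - t) * (c1 - (ip x1 w + ip y u1 - ip y w)).
  by rewrite mulr_ge0 ?subr_ge0 ?F1.
have h2 : 0 <= t * (c2 - (ip x2 w + ip y u2 - ip y w)).
  by rewrite mulr_ge0 ?subr_ge0 ?F2.
move: h1 h2; rewrite !(ipE hip); lra.
Qed.

Lemma fitzpatrick_le_ge_ip M x u c : maximally_monotone ip M ->
  fitzpatrick_le M x u c -> ip x u <= c.
Proof.
move=> hM Fxu; rewrite leNgt; apply/negP => c_lt.
have Mxu : M x u.
  apply: maximally_monotoneP => // p a Mpa; have := Fxu p a Mpa.
  rewrite !(ipE hip); lra.
by have := Fxu x u Mxu; lra.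
Qed.

End MonotoneOperators.

Section Closure.
Variables (R : realType) (X : normedModType R).
Implicit Types (S P Q : set X).

Lemma closure_normP S x :
  closure S x <-> forall e, 0 < e -> exists2 y, S y & `|x - y| < e.
Proof.
split=> [clSx e e_gt0|Sx B /nbhs_ballP[e /= e_gt0 eB]].
  have [|y [Sy]] := clSx (ball x e); first exact: nbhsx_ballx.
  by rewrite -ball_normE; exists y.
have [y Sy xy] := Sx e e_gt0; exists y; split => //; apply: eB.
by rewrite -ball_normE.
Qed.

Lemma convex_setP S : convex_set S <->
  forall x y (t : R), 0 <= t <= 1 -> S x -> S y -> S (t *: x + (1 - t) *: y).
Proof.
split=> [cS x y t /andP[t_ge0 t_le1] Sx Sy|cS x y t].
  by have := cS x y (Itv01 t_ge0 t_le1); rewrite !inE => /(_ Sx Sy).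
by rewrite !inE => Sx Sy; apply: cS => //; rewrite ge0 le1.
Qed.

Lemma closure_add_scale P Q (k : R) a b : closure P a -> closure Q b ->
  closure [set p + k *: q | p in P & q in Q] (a + k *: b).
Proof.
move=> /closure_normP Pa /closure_normP Qb; apply/closure_normP => e e_gt0.
have k1_gt0 : 0 < `|k| + 1 by rewrite ltr_pwDr.
have e2_gt0 : 0 < e / 2 by lra.
have [p Pp ap] := Pa _ e2_gt0.
have [q Qq bq] := Qb _ (divr_gt0 e2_gt0 k1_gt0).
exists (p + k *: q); first by exists p => //; exists q.
rewrite opprD addrACA -scalerBr; apply: le_lt_trans (ler_normD _ _) _.
have : `|k *: (b - q)| <= e / 2.
  rewrite normrZ -[leRHS](mulfVK (lt0r_neq0 k1_gt0)) mulrC.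
  by rewrite ler_pM ?normr_ge0 ?(ltW bq) // lerDl.
lra.
Qed.

Lemma convex_closure S :
  (forall x y (t : R), 0 <= t <= 1 -> S x -> S y ->
    closure S (t *: x + (1 - t) *: y)) ->
  convex_set (closure S).
Proof.
move=> hS; apply/convex_setP => x y t t01 /closure_normP Sx /closure_normP Sy.
have /andP[t_ge0 t_le1] := t01.
apply/closure_normP => e e_gt0; have e2_gt0 : 0 < e / 2 by lra.
have [x' Sx' xx'] := Sx _ e2_gt0; have [y' Sy' yy'] := Sy _ e2_gt0.
have /closure_normP/(_ _ e2_gt0) [z Sz z_near] := hS _ _ _ t01 Sx' Sy'.
exists z => //.
have -> : t *: x + (1 - t) *: y - z =
    t *: (x - x') + (1 - t) *: (y - y') + (t *: x' + (1 - t) *: y' - z).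
  by rewrite !scalerBr (addrACA (t *: x)) -opprD subrKA.
have near_xy : `|t *: (x - x') + (1 - t) *: (y - y')| <= e / 2.
  apply: le_trans (ler_normD _ _) _; rewrite !normrZ !ger0_norm ?subr_ge0 //.
  have := ler_wpM2l t_ge0 (ltW xx').
  have t1_ge0 : 0 <= 1 - t by rewrite subr_ge0.
  have := ler_wpM2l t1_ge0 (ltW yy').
  lra.
by apply: le_lt_trans (ler_normD _ _) _; lra.
Qed.

Lemma closure_translate S T d x : (forall s, S s -> closure T (s + d)) ->
  closure S x -> closure T (x + d).
Proof.
move=> STd /closure_normP Sx; apply/closure_normP => e e_gt0.
have e2_gt0 : 0 < e / 2 by lra.
have [s Ss xs] := Sx _ e2_gt0.
have /closure_normP/(_ _ e2_gt0) [y Ty sy] := STd s Ss.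
exists y => //.
have -> : x + d - y = (x - s) + (s + d - y) by rewrite addrA subrKA.
by apply: le_lt_trans (ler_normD _ _) _; lra.
Qed.

Lemma convex_closure_add_scale P Q (k : R) :
  convex_set (closure P) -> convex_set (closure Q) ->
  convex_set (closure [set p + k *: q | p in P & q in Q]).
Proof.
move=> /convex_setP cP /convex_setP cQ.
apply: convex_closure => _ _ t t01 [p1 Pp1 [q1 Qq1 <-]] [p2 Pp2 [q2 Qq2 <-]].
have -> : t *: (p1 + k *: q1) + (1 - t) *: (p2 + k *: q2) =
    (t *: p1 + (1 - t) *: p2) + k *: (t *: q1 + (1 - t) *: q2).
  by rewrite !scalerDr !scalerA mulrC (mulrC (1 - t)) addrACA -!scalerA.
by apply: closure_add_scale; [apply: cP|apply: cQ] => //; apply: subset_closure.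
Qed.

End Closure.

Section Projection.
Variables (R : realType) (X : normedModType R) (ip : X -> X -> R).
Hypothesis hip : is_inner_product ip.

Lemma is_proj_ip_le (S : set X) z p s : convex_set S -> is_proj S z p -> S s ->
  ip (z - p) (s - p) <= 0.
Proof.
move=> /convex_setP cS [Sp p_min] Ss.
set a := z - p; set b := s - p.
suff : 0 <= - 2 * ip a b by lra.
apply: (@ge0_affine_near0 _ _ (ip b b)) => t t_gt0 t_le1.
have Sq : S (t *: s + (1 - t) *: p) by apply: cS; rewrite ?(ltW t_gt0).
have : ip a a <= ip (a - t *: b) (a - t *: b).
  have := p_min _ Sq; rewrite !ipxx // ler_pXn2r ?nnegrE ?normr_ge0 //.
  by rewrite /a /b scalerBl scale1r scalerBr addrCA opprD addrA.
clearbody a b; rewrite !(ipE hip) (ipC hip b a) => h.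
by rewrite -(pmulr_rge0 _ t_gt0); lra.
Qed.

Lemma is_proj0_ip_le (S : set X) p s : convex_set S -> is_proj S 0 p -> S s ->
  ip p p <= ip s p.
Proof.
move=> cS Sp /(is_proj_ip_le cS Sp); rewrite sub0r !(ipE hip) (ipC hip s p).
lra.
Qed.

Lemma eq_orthogonal_sum v p q : ip p q = 0 -> `|v| <= `|p + q| ->
  ip p p <= ip v p -> ip q q <= ip v q -> v = p + q.
Proof.
move=> pq_orth v_le hp hq; apply/eqP; rewrite -subr_eq0; apply/eqP/(ipxx_le0 hip).
have : ip v v <= ip (p + q) (p + q).
  by rewrite !ipxx // ler_pXn2r // nnegrE normr_ge0.
by rewrite !(ipE hip) (ipC hip q p) (ipC hip p v) (ipC hip q v) pq_orth; lra.
Qed.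

End Projection.

Lemma cvg_of_sqr_dist_le (R : realType) (X : completeNormedModType R)
    (a : nat -> X) (r : nat -> R) :
  r @ \oo --> 0 -> (forall n k, (n <= k)%N -> `|a n - a k| ^+ 2 <= r n) ->
  cvg (a @ \oo).
Proof.
move=> /cvgrPdist_lt r0 ar; apply: cauchy_cvg; apply: cauchy_exP => e e_gt0.
have [N _ rN] := r0 _ (exprn_gt0 2 e_gt0).
exists (a N), N => // k Nk /=; rewrite -ball_normE /=.
rewrite -(ltr_pXn2r (n := 2)) ?nnegrE ?normr_ge0 ?(ltW e_gt0) //.
apply: le_lt_trans (ar N k Nk) _.
by have := rN N (leqnn N); rewrite sub0r normrN; apply: le_lt_trans (ler_norm _).
Qed.

Section MintyZero.
Variables (R : realType) (X : completeNormedModType R) (ip : X -> X -> R).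
Hypothesis hip : is_inner_product ip.
Variable M : X -> set X.
Hypothesis hM : maximally_monotone ip M.

Let F := fitzpatrick_le ip M.
Let energy x u c := c + (ip x x + ip u u) / 2.

Let energy_ge0 x u c : F x u c -> 0 <= energy x u c.
Proof.
move=> /(fitzpatrick_le_ge_ip hip hM); have := ipxx_ge0 hip (x + u).
by rewrite /energy !(ipE hip) (ipC hip u x); lra.
Qed.

Let sqr_dist_le_energy m x1 u1 c1 x2 u2 c2 :
  (forall x u c, F x u c -> m <= energy x u c) -> F x1 u1 c1 -> F x2 u2 c2 ->
  ip (x1 - x2) (x1 - x2) + ip (u1 - u2) (u1 - u2) <=
    4 * (energy x1 u1 c1 + energy x2 u2 c2 - 2 * m).
Proof.
move=> m_le F1 F2.
have /m_le := fitzpatrick_le_conv hip (t := 2^-1) ltac:(lra) F1 F2.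
by rewrite /energy !(ipE hip) (ipC hip x2 x1) (ipC hip u2 u1); lra.
Qed.

Let energy_inf_seq : exists (m : R) (s : nat -> X * X * R),
  (forall x u c, F x u c -> m <= energy x u c) /\
  forall n, F (s n).1.1 (s n).1.2 (s n).2 /\
    energy (s n).1.1 (s n).1.2 (s n).2 < m + harmonic n.
Proof.
pose E := [set r | exists x u c, F x u c /\ energy x u c = r].
have [y [w Myw]] : exists y w, M y w.
  have [//|graph0] := pselect (exists y w, M y w).
  exists 0, 0; apply: (maximally_monotoneP hip hM) => p a Mpa.
  by case: graph0; exists p, a.
have E_inf : has_inf E.
  split; last by exists 0 => _ [x [u [c [Fxuc <-]]]]; exact: energy_ge0.
  exists (energy y w (ip y w)), y, w, (ip y w).
  by split=> //; apply: fitzpatrick_le_graph hM.1 Myw.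
have near_inf n : exists t : X * X * R,
    F t.1.1 t.1.2 t.2 /\ energy t.1.1 t.1.2 t.2 < inf E + harmonic n.
  have [_ [x [u [c [Fxuc <-]]]] lt] := inf_adherent (harmonic_gt0 n) E_inf.
  by exists (x, u, c).
have [s s_min] := choice near_inf.
exists (inf E), s; split=> // x u c Fxuc.
by apply: (ge_inf E_inf.2); exists x, u, c.
Qed.

Let energy_has_min : exists x0 u0 c0, F x0 u0 c0 /\
  forall x u c, F x u c -> energy x0 u0 c0 <= energy x u c.
Proof.
have [m [s [m_le s_min]]] := energy_inf_seq.
pose xs n := (s n).1.1; pose us n := (s n).1.2.
have dist_le n k : (n <= k)%N ->
    ip (xs n - xs k) (xs n - xs k) + ip (us n - us k) (us n - us k) <=
      8 * harmonic n.
  move=> nk; apply: le_trans (sqr_dist_le_energy m_le (s_min n).1 (s_min k).1) _.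
  have : harmonic k <= harmonic n :> R.
    by rewrite /= lef_pV2 ?posrE // ler_nat ltnS.
  by have := (s_min n).2; have := (s_min k).2; lra.
have h8 : (fun n => 8 * harmonic n) @ \oo --> (0 : R).
  by rewrite -[X in _ --> X](mulr0 8); apply: cvgMl_tmp; exact: cvg_harmonic.
have /cvg_ex[x0 xs_x0] : cvg (xs @ \oo).
  apply: (cvg_of_sqr_dist_le h8) => n k /dist_le; rewrite -!(ipxx hip).
  by have := ipxx_ge0 hip (us n - us k); lra.
have /cvg_ex[u0 us_u0] : cvg (us @ \oo).
  apply: (cvg_of_sqr_dist_le h8) => n k /dist_le; rewrite -!(ipxx hip).
  by have := ipxx_ge0 hip (xs n - xs k); lra.
exists x0, u0, (m - (ip x0 x0 + ip u0 u0) / 2); split; last first.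
  by move=> x u c /m_le; rewrite /energy subrK.
move=> y w Myw; rewrite lerBrDr.
have lhs_cvg : ip (xs n) w + ip y (us n) - ip y w +
    (ip (xs n) (xs n) + ip (us n) (us n)) / 2 @[n --> \oo] -->
    ip x0 w + ip y u0 - ip y w + (ip x0 x0 + ip u0 u0) / 2.
  apply: cvgD; [apply: cvgD; [apply: cvgD|exact: cvg_cst]|].
    1,2: by apply: ip_cvg => //; exact: cvg_cst.
  by apply: cvgMr_tmp; apply: cvgD; apply: ip_cvg.
have rhs_cvg : m + harmonic n @[n --> \oo] --> m.
  rewrite -[X in _ --> X]addr0.
  by apply: cvgD; [exact: cvg_cst|exact: cvg_harmonic].
apply: (ler_cvg_to lhs_cvg rhs_cvg); near=> n.
have [Fn En] := s_min n; have := Fn y w Myw.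
by move: En; rewrite /energy; lra.
Unshelve. all: by end_near.
Qed.

Let energy_min_ineq x0 u0 c0 : F x0 u0 c0 ->
  (forall x u c, F x u c -> energy x0 u0 c0 <= energy x u c) ->
  forall y w, M y w -> 0 <= ip y w - c0 + ip x0 (y - x0) + ip u0 (w - u0).
Proof.
move=> F0 min0 y w Myw.
pose b := (ip (y - x0) (y - x0) + ip (w - u0) (w - u0)) / 2.
apply: (@ge0_affine_near0 _ _ b) => t t_gt0 t_le1.
have t01 : 0 <= t <= 1 by rewrite (ltW t_gt0).
have /min0 := fitzpatrick_le_conv hip t01 F0 (fitzpatrick_le_graph hip hM.1 Myw).
rewrite /b /energy !(ipE hip) (ipC hip y x0) (ipC hip w u0) => h.
by rewrite -(pmulr_rge0 _ t_gt0); lra.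
Qed.

Lemma minty0 : exists y w, M y w /\ y + w = 0.
Proof.
have [x0 [u0 [c0 [F0 min0]]]] := energy_has_min.
have vi := energy_min_ineq F0 min0.
have c0_ge := fitzpatrick_le_ge_ip hip hM F0.
have x0u0_ge0 := ipxx_ge0 hip (x0 + u0).
(* The first-order condition at the minimizer (x0, u0) puts (-u0, -x0) in
   the graph. *)
have Mu0x0 : M (- u0) (- x0).
  apply: (maximally_monotoneP hip hM) => p a Mpa; move: (vi p a Mpa) x0u0_ge0.
  by rewrite !(ipE hip) (ipC hip p x0) (ipC hip u0 x0); lra.
exists (- u0), (- x0); split => //.
suff -> : x0 = - u0 by rewrite opprK addNr.
apply/eqP; rewrite -subr_eq0 opprK; apply/eqP/(ipxx_le0 hip).
by move: (vi _ _ Mu0x0) x0u0_ge0; rewrite !(ipE hip) (ipC hip u0 x0); lra.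
Qed.

End MintyZero.

Section Minty.
Variables (R : realType) (X : completeNormedModType R) (ip : X -> X -> R).
Hypothesis hip : is_inner_product ip.

Lemma minty M z (lam : R) : maximally_monotone ip M -> 0 < lam ->
  exists y w, M y w /\ y + lam *: w = z.
Proof.
move=> hM lam_gt0.
have [y [_ [[w Myw <-] yw0]]] :=
  minty0 hip (maximally_monotone_rescale hip z lam_gt0 hM).
by exists y, w; split => //; apply/eqP; rewrite -subr_eq0 -yw0 addrA.
Qed.

Lemma resolvent_dist_conv_le M p a q b t lam y w z :
  monotone_op ip M -> M p a -> M q b -> M y w -> 0 <= t <= 1 -> 0 <= lam ->
  t *: p + (1 - t) *: q = z -> y + lam *: w = z ->
  `|z - y| ^+ 2 <= lam * (`|a| + `|b|) * (`|z - y| + `|z - p| + `|z - q|).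
Proof.
move=> monoM Mpa Mqb Myw /andP[t_ge0 t_le1] lam_ge0 tpq yw.
have lam_ip :
    `|z - y| ^+ 2 = lam * (t * - ip (y - p) w + (1 - t) * - ip (y - q) w).
  have lamw : lam *: w = z - y by rewrite -yw addrAC subrr add0r.
  have zy : z - y = - (t *: (y - p) + (1 - t) *: (y - q)).
    by rewrite !scalerBr addrACA -scalerDl subrKC scale1r -opprD tpq opprB.
  rewrite -(ipxx hip) -[X in ip _ X]lamw (ipZr hip) zy.
  by rewrite !(ipE hip); ring.
have mono_le p' a' : M p' a' -> - ip (y - p') w <= (`|z - y| + `|z - p'|) * `|a'|.
  move=> Mpa'; have := monoM _ _ _ _ Myw Mpa'; rewrite (ipBr hip) subr_ge0.
  rewrite -lerN2 => /le_trans; apply; apply: le_trans (ler_norm _) _.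
  rewrite normrN; apply: le_trans (cauchy_schwarz hip _ _) _.
  by rewrite ler_wpM2r // (distrC z y); apply: ler_distD.
have := mono_le _ _ Mpa; have := mono_le _ _ Mqb.
rewrite lam_ip -mulrA => hQ hP; apply: ler_wpM2l => //.
have hDa : 0 <= (`|z - y| + `|z - p|) * `|a| by rewrite mulr_ge0 ?addr_ge0.
have hDb : 0 <= (`|z - y| + `|z - q|) * `|b| by rewrite mulr_ge0 ?addr_ge0.
have := le_trans (ler_wpM2l t_ge0 hP) (ler_piMl hDa t_le1).
have t1_ge0 : 0 <= 1 - t by rewrite subr_ge0.
have t1_le1 : 1 - t <= 1 by rewrite lerBlDr lerDl.
have := le_trans (ler_wpM2l t1_ge0 hQ) (ler_piMl hDb t1_le1).
have := mulr_ge0 (normr_ge0 (z - q)) (normr_ge0 a).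
have := mulr_ge0 (normr_ge0 (z - p)) (normr_ge0 b).
lra.
Qed.

Lemma convex_closure_dom_op M :
  maximally_monotone ip M -> convex_set (closure (dom_op M)).
Proof.
move=> hM; apply: convex_closure => p q t t01 [a Mpa] [b Mqb].
set z := t *: p + (1 - t) *: q; apply/closure_normP => e e_gt0.
set L := `|a| + `|b|; set K := `|z - p| + `|z - q|.
have L_ge0 : 0 <= L by rewrite addr_ge0.
have K_ge0 : 0 <= K by rewrite addr_ge0.
set c := Num.min (e / 4) (e ^+ 2 / 4).
have c_gt0 : 0 < c by rewrite lt_min !divr_gt0 ?exprn_gt0.
have LK_gt0 : 0 < (L + 1) * (K + 1) by apply: mulr_gt0; lra.
pose lam := c / ((L + 1) * (K + 1)).
have lam_gt0 : 0 < lam by rewrite divr_gt0.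
have lamLK : lam * ((L + 1) * (K + 1)) = c by rewrite mulfVK ?lt0r_neq0.
have [y [w [Myw yw]]] := minty z hM lam_gt0.
have d_le := resolvent_dist_conv_le (z := z) hM.1 Mpa Mqb Myw t01
  (ltW lam_gt0) erefl yw.
exists y; first by exists w.
clearbody z; rewrite -addrA -/L -/K in d_le; set d := `|z - y| in d_le *.
have : lam * L <= c by rewrite -lamLK ler_wpM2l ?ltW //; nra.
have : lam * L * K <= c by rewrite -lamLK -mulrA ler_wpM2l ?ltW //; nra.
have : c <= e / 4 by rewrite ge_min lexx.
have : c <= e ^+ 2 / 4 by rewrite ge_min lexx orbT.
have := normr_ge0 (z - y); rewrite -/d; nra.
Qed.

Lemma convex_closure_ran_op M :
  maximally_monotone ip M -> convex_set (closure (ran_op M)).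
Proof. by move=> /(maximally_monotone_inv hip)/convex_closure_dom_op. Qed.

Lemma closure_ran_op_shift M u (beta : R) q0 b0 : maximally_monotone ip M ->
  (forall q b, M q b -> ip q u <= beta) -> M q0 b0 ->
  closure (ran_op M) (b0 + u).
Proof.
move=> hM dom_le Mq0b0; apply/closure_normP => e e_gt0.
have g_ge0 : 0 <= beta - ip q0 u by rewrite subr_ge0 (dom_le _ _ Mq0b0).
pose lam := (beta - ip q0 u) / e ^+ 2 + 1.
have lam_gt0 : 0 < lam.
  by have := divr_ge0 g_ge0 (exprn_ge0 2 (ltW e_gt0)); rewrite /lam; lra.
have [y [w [Myw yw]]] := minty (q0 + lam *: (b0 + u)) hM lam_gt0.
exists w; first by exists y.
set r := b0 + u - w.
have lam_r : y - q0 = lam *: r.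
  by rewrite /r scalerBr -[lam *: (b0 + u)](addKr q0) -yw addrA addrK addrC.
have ew : w - b0 = u - r.
  by rewrite /r (addrC b0) -addrA opprD addrA subrr add0r opprB addrC.
have mono : 0 <= ip (lam *: r) (u - r) by rewrite -lam_r -ew; exact: hM.1.
have dom : ip (lam *: r) u <= beta - ip q0 u.
  by rewrite -lam_r (ipBl hip) lerD2r (dom_le _ _ Myw).
have : lam * ip r r <= beta - ip q0 u.
  by clearbody r; move: mono dom; rewrite !(ipE hip); lra.
rewrite ipxx // => lam_r2.
rewrite -(ltr_pXn2r (n := 2)) ?nnegrE ?normr_ge0 ?ltW // -(ltr_pM2l lam_gt0).
apply: le_lt_trans lam_r2 _; rewrite -ltr_pdivrMr ?exprn_gt0 //.
by rewrite ltrDl ltr01.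
Qed.

End Minty.

(* {x | 0 ∈ -r + Ax + B(x - d)}: Z is [shifted_zeros A B v v] and Zt is
   [shifted_zeros A B vD vR]. *)
Definition shifted_zeros (R : realType) (X : normedModType R) (A B : X -> set X)
    (d r : X) : set X :=
  [set x | exists a b, [/\ A x a, B (x - d) b & 0 = - r + a + b]].

Section ShiftedZeros.
Variables (R : realType) (X : completeNormedModType R) (ip : X -> X -> R).
Hypothesis hip : is_inner_product ip.
Variables (A B : X -> set X) (vD vR : X).
Hypotheses (hA : maximally_monotone ip A) (hB : maximally_monotone ip B).
Hypotheses (hvD : is_proj (closure (dom_diff A B)) 0 vD)
  (hvR : is_proj (closure (ran_sum A B)) 0 vR).

Lemma convex_closure_dom_diff : convex_set (closure (dom_diff A B)).
Proof.
have -> : dom_diff A B = [set p + (-1) *: q | p in dom_op A & q in dom_op B].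
  apply/seteqP; split=> [d [p [q [Ap Bq ->]]]|d [p Ap [q Bq <-]]].
    by exists p => //; exists q; rewrite // scaleN1r.
  by exists p, q; rewrite scaleN1r.
by apply: convex_closure_add_scale; exact/(convex_closure_dom_op hip).
Qed.

Lemma convex_closure_ran_sum : convex_set (closure (ran_sum A B)).
Proof.
have -> : ran_sum A B = [set p + 1 *: q | p in ran_op A & q in ran_op B].
  apply/seteqP; split=> [d [p [q [Ap Bq ->]]]|d [p Ap [q Bq <-]]].
    by exists p => //; exists q; rewrite // scale1r.
  by exists p, q; rewrite scale1r.
by apply: convex_closure_add_scale; exact/(convex_closure_ran_op hip).
Qed.

Lemma proj_closure_dom_diff_le s :
  closure (dom_diff A B) s -> ip vD vD <= ip s vD.
Proof. by apply: (is_proj0_ip_le hip) hvD; exact: convex_closure_dom_diff. Qed.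

Lemma proj_closure_ran_sum_le s :
  closure (ran_sum A B) s -> ip vR vR <= ip s vR.
Proof. by apply: (is_proj0_ip_le hip) hvR; exact: convex_closure_ran_sum. Qed.

Lemma proj_dom_diff_le p a q b : A p a -> B q b -> ip vD vD <= ip (p - q) vD.
Proof.
move=> Apa Bqb; apply/proj_closure_dom_diff_le/subset_closure.
by exists p, q; split => //; [exists a|exists b].
Qed.

Lemma proj_ran_sum_le p a q b : A p a -> B q b -> ip vR vR <= ip (a + b) vR.
Proof.
move=> Apa Bqb; apply/proj_closure_ran_sum_le/subset_closure.
by exists a, b; split => //; [exists p|exists q].
Qed.

Lemma shifted_zeros_orthogonal x a b : A x a -> B (x - vD) b -> a + b = vR ->
  ip vR vD = 0 /\ B (x - vD - vR) (b + vD).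
Proof.
move=> Axa Bb ab; set c := x - vD in Bb *.
have ipE' := ipE hip.
have hAx p a' : A p a' -> 0 <= ip (p - x) vD.
  by move=> /proj_dom_diff_le/(_ Bb); rewrite /c !ipE'; lra.
have hBc q b' : B q b' -> 0 <= ip (q - c) (- vD).
  by move=> /(proj_dom_diff_le Axa); rewrite /c !ipE'; lra.
have hAa p a' : A p a' -> 0 <= ip (a' - a) vR.
  by move=> /proj_ran_sum_le/(_ Bb); rewrite -{1}ab !ipE'; lra.
have hBb q b' : B q b' -> 0 <= ip (b' - b) vR.
  by move=> /(proj_ran_sum_le Axa); rewrite -{1}ab !ipE'; lra.
have k_le0 : ip vR vD <= 0.
  rewrite leNgt; apply/negP => k_gt0.
  have := maximally_monotone_shift hip hA Axa hAx hAa (ltW k_gt0).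
  by move=> /proj_dom_diff_le/(_ Bb); rewrite /c !ipE'; lra.
have Bcb : B (c - vR) (b + vD).
  rewrite -[vD]opprK; apply: (maximally_monotone_shift hip hB Bb hBc hBb).
  by rewrite ipE'; lra.
split=> //; apply/eqP; rewrite eq_le k_le0 /=.
by have := proj_dom_diff_le Axa Bcb; rewrite /c !ipE'; lra.
Qed.

Lemma closure_ran_sum_addr s :
  closure (ran_sum A B) s -> closure (ran_sum A B) (s + vD).
Proof.
apply: closure_translate => _ [a [b [[p Apa] [q Bqb] ->]]].
have dom_le q' b' : B q' b' -> ip q' vD <= ip p vD - ip vD vD.
  by move=> /(proj_dom_diff_le Apa); rewrite (ipBl hip); lra.
rewrite -addrA addrC; move: (closure_ran_op_shift hip hB dom_le Bqb).
apply: closure_translate => b' [q' Bqb']; apply: subset_closure.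
by exists a, b'; split; [exists p|exists q'|rewrite addrC].
Qed.

Lemma shifted_zeros_subset v :
  is_proj (closure (dom_diff A B `&` ran_sum A B)) 0 v ->
  shifted_zeros A B vD vR `<=` shifted_zeros A B v v.
Proof.
move=> [v_cl v_min] x [a [b [Axa Bb e0]]].
have ab : a + b = vR by apply/eqP; rewrite -subr_eq0 addrC addrA -e0.
have [k0 Bb'] := shifted_zeros_orthogonal Axa Bb ab.
have v_eq : v = vD + vR.
  have [clDv clRv] := closureI v_cl.
  apply: (eq_orthogonal_sum hip); first by rewrite (ipC hip).
  - have := v_min (vD + vR); rewrite !sub0r !normrN; apply; apply: subset_closure.
    split; [exists x, (x - vD - vR)|exists a, (b + vD)]; split.
    + by exists a.
    + by exists (b + vD).
    + by rewrite -addrA -opprD subKr.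
    + by exists x.
    + by exists (x - vD - vR).
    + by rewrite addrA ab addrC.
  - exact: proj_closure_dom_diff_le.
  - exact: proj_closure_ran_sum_le.
exists a, (b + vD); split => //; first by rewrite v_eq opprD addrA.
by rewrite v_eq -addrA (addrA a) ab (addrC vR) addNr.
Qed.

Lemma shifted_zeros_supset v : vR = 0 ->
  closure (dom_diff A B `&` ran_sum A B) =
    closure (dom_diff A B) `&` closure (ran_sum A B) ->
  is_proj (closure (dom_diff A B `&` ran_sum A B)) 0 v ->
  shifted_zeros A B v v `<=` shifted_zeros A B vD 0.
Proof.
move=> vR0 clDR [v_cl v_min] x [a [b [Axa Bb e0]]].
have vD_cl : closure (dom_diff A B `&` ran_sum A B) vD.
  rewrite clDR; split; first exact: hvD.1.
  by rewrite -[vD]add0r; apply: closure_ran_sum_addr; rewrite -vR0; exact: hvR.1.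
have v_eq : v = vD.
  rewrite -[vD]addr0; apply: (eq_orthogonal_sum hip); first by rewrite ip0r.
  - by rewrite addr0; have := v_min _ vD_cl; rewrite !sub0r !normrN.
  - exact/proj_closure_dom_diff_le/(closureI v_cl).1.
  - by rewrite !ip0r.
rewrite {}v_eq in Bb e0.
have Axa' : A x (a - vD).
  rewrite -[x]subr0; apply: (maximally_monotone_shift hip hA Axa).
  - by move=> p a' /proj_dom_diff_le/(_ Bb); rewrite !(ipE hip); lra.
  - by move=> p a' _; rewrite ip0r.
  - by rewrite ip0l.
by exists (a - vD), b; split => //; rewrite oppr0 add0r e0 (addrC a).
Qed.

End ShiftedZeros.

Theorem theorem4p3 (R : realType) (X : completeNormedModType R)
  (ip : X -> X -> R) (hip : is_inner_product ip)
  (A B : X -> set X)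
  (hA : maximally_monotone ip A) (hB : maximally_monotone ip B)
  (v vD vR : X)
  (hv : is_proj (closure (ran_op (id_minus (DR_op A B)))) 0 v)
  (hvD : is_proj (closure (dom_diff A B)) 0 vD)
  (hvR : is_proj (closure (ran_sum A B)) 0 vR)
  (hran1 : closure (ran_op (id_minus (DR_op A B))) =
           closure (dom_diff A B `&`
                    ran_sum A B))
  (hran2 : closure (dom_diff A B `&`
                    ran_sum A B) =
           closure (dom_diff A B) `&`
           closure (ran_sum A B)) :
  let Z := [set x : X | exists a b, [/\ A x a, B (x - v) b & 0 = - v + a + b]] in
  let Zt := [set x : X | exists a b, [/\ A x a, B (x - vD) b & 0 = - vR + a + b]] in
  Zt `<=` Z /\ (vR = 0 -> Zt = Z).
Proof.
move=> Z Zt; rewrite hran1 in hv.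
have Zt_sub_Z : Zt `<=` Z := shifted_zeros_subset hip hA hB hvD hvR hv.
split=> // vR0; apply/seteqP; split=> //.
have := shifted_zeros_supset hip hA hB hvD hvR vR0 hran2 hv.
by rewrite /Zt vR0.
Qed.
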